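(* Consider the problem $\min f(x)$ subject to $x\in\mathcal{F}\cap\mathcal{Z}\cap X$, where $\mathcal{F}=\{x: g(x)\le0\}$, and suppose the extended Mangasarian–Fromovitz condition (EMFCQ, see context) holds. Then there is $\varepsilon^\star>0$ such that for every $\varepsilon\in(0,\varepsilon^\star]$ the penalty function $P(x;\varepsilon)=f(x)+\frac1\varepsilon\sum_{i=1}^m\max\{0,g_i(x)\}$ has no Clarke stationary points (for the problem $\min\{P(x;\varepsilon): x\in X\cap\mathcal{Z}\}$) in $(X\cap\mathcal{Z})\setminus\mathcal{F}$.
   Context: $\{1,\dots,n\}=I^c\cup I^z$, $I^c\cap I^z=\emptyset$; $v_c=(v_i)_{i\in I^c}$, $v_z=(v_i)_{i\in I^z}$. $l,u\in\mathbb{R}^n$ finite, $l_i<u_i$, $l_i,u_i\in\mathbb{Z}$ for $i\in I^z$; $X=\{x:l\le x\le u\}$, $\mathcal{Z}=\{x: x_i\in\mathbb{Z}\ \forall i\in I^z\}$. $f:\mathbb{R}^n\to\mathbb{R}$ and $g=(g_1,\dots,g_m):\mathbb{R}^n\to\mathbb{R}^m$ are Lipschitz continuous w.r.t. the continuous variables: there is $L>0$ with $|h(x)-h(y)|\le L\|x-y\|$ for $h\in\{f,g_1,\dots,g_m\}$ whenever $x_z=y_z$. A vector in $\mathbb{Z}^p$ is primitive if the gcd of its components is 1. For $x\in X\cap\mathcal{Z}$: $D^z(x)=\{d\in\mathbb{Z}^n: d_i=0\ (i\in I^c),\ d_z\text{ primitive},\ x+d\in X\cap\mathcal{Z}\}$,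 $\mathcal{B}^z(x)=\{x+d: d\in D^z(x)\}$, $D^c(x)=\{s: s_i=0\ (i\in I^z),\ s_i\ge0 \text{ if } i\in I^c,x_i=l_i,\ s_i\le0\text{ if } i\in I^c,x_i=u_i\}$. For $h$ Lipschitz w.r.t. continuous variables and $s$ with $s_z=0$: $h^{Cl}_{x_c}(x;s)=\limsup_{y_c\to x_c,\,y_z=x_z,\,t\downarrow0}\frac{h(y+ts)-h(y)}{t}$, and $\partial_c h(x)=\{v\in\mathbb{R}^n: v_z=0,\ h^{Cl}_{x_c}(x;s)\ge s^\top v\ \forall s \text{ with } s_z=0\}$. A point $x\in X\cap\mathcal{Z}$ is a Clarke stationary point of $\min\{P(\cdot;\varepsilon):X\cap\mathcal{Z}\}$ if $P^{Cl}_{x_c}(x;s)\ge0$ for all $s\in D^c(x)$ and $P(x;\varepsilon)\le P(y;\varepsilon)$ for all $y\in\mathcal{B}^z(x)$. EMFCQ: for every $x\in(X\cap\mathcal{Z})\setminus\operatorname{int}\mathcal{F}$, either (i) there is $s\in D^c(x)$ with $\xi^\top s<0$ for all $\xi\in\partial_c g_i(x)$ and all $i$ with $g_i(x)\ge0$; or (ii) there is $\bar d\in D^z(x)$ with $\sum_{i=1}^m\max\{0,g_i(x+\bar d)\}<\sum_{i=1}^m\max\{0,g_i(x)\}$. *)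

From HB Require Import structures.
From mathcomp Require Import all_boot all_order all_algebra.
From mathcomp Require Import classical_sets reals constructive_ereal ereal.
Set Implicit Arguments. Unset Strict Implicit. Unset Printing Implicit Defensive.
Import Order.TTheory GRing.Theory Num.Theory.
Local Open Scope ring_scope.
Local Open Scope classical_set_scope.

Section Defs.
Variables (R : realType) (n : nat).
Notation vec := ('I_n -> R).

Definition enorm (x : vec) : R := Num.sqrt (\sum_(i < n) x i ^+ 2).
Definition dotp (s v : vec) : R := \sum_(i < n) s i * v i.
Definition vadd (x y : vec) : vec := fun i => x i + y i.
Definition vsub (x y : vec) : vec := fun i => x i - y i.
Definition vscale (t : R) (s : vec) : vec := fun i => t * s i.

(* Iz : the set I^z of integer variables; I^c is its complement *)
Variable Iz : {set 'I_n}.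

Definition same_z (x y : vec) : Prop := forall i, i \in Iz -> x i = y i.
Definition zero_z (s : vec) : Prop := forall i, i \in Iz -> s i = 0.

Definition is_intR (r : R) : Prop := exists k : int, r = k%:~R.

Definition inX (l u : vec) (x : vec) : Prop := forall i, l i <= x i <= u i.
Definition inZ (x : vec) : Prop := forall i, i \in Iz -> is_intR (x i).

Definition inDz (l u : vec) (x : vec) (d : 'I_n -> int) : Prop :=
  (forall i, i \notin Iz -> d i = 0%R) /\
  (\big[gcdz/0%R]_(i in Iz) d i = 1%R) /\
  inX l u (fun i => x i + (d i)%:~R) /\ inZ (fun i => x i + (d i)%:~R).

Definition inBz (l u : vec) (x y : vec) : Prop :=
  exists d, inDz l u x d /\ y = (fun i => x i + (d i)%:~R).

Definition inDc (l u : vec) (x s : vec) : Prop :=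
  zero_z s /\
  (forall i, i \notin Iz -> x i = l i -> 0 <= s i) /\
  (forall i, i \notin Iz -> x i = u i -> s i <= 0).

(* Clarke generalized directional derivative w.r.t. the continuous variables:
   limsup_{y_c -> x_c, y_z = x_z, t downarrow 0} (h(y + t s) - h(y)) / t,
   written out as inf_{delta>0} sup {... : |y - x| < delta, y_z = x_z, 0 < t < delta}. *)
Definition clarke_dd (h : vec -> R) (x s : vec) : \bar R :=
  ereal_inf [set ereal_sup
     [set r : \bar R | exists (y : vec) (t : R),
        same_z y x /\ enorm (vsub y x) < delta /\ 0 < t < delta /\
        r = ((h (vadd y (vscale t s)) - h y) / t)%:E]
   | delta in [set d : R | 0 < d]].

Definition in_clarke_subdiff (h : vec -> R) (x v : vec) : Prop :=
  zero_z v /\ forall s, zero_z s -> ((dotp s v)%:E <= clarke_dd h x s)%E.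

Definition lipschitz_c (L : R) (h : vec -> R) : Prop :=
  forall x y, same_z x y -> `|h x - h y| <= L * enorm (vsub x y).

Variable m : nat.

Definition viol (g : 'I_m -> vec -> R) (x : vec) : R :=
  \sum_(i < m) Num.max 0 (g i x).

Definition penalty (f : vec -> R) (g : 'I_m -> vec -> R) (eps : R) (x : vec) : R :=
  f x + eps^-1 * viol g x.

Definition inF (g : 'I_m -> vec -> R) (x : vec) : Prop := forall i, g i x <= 0.
Definition in_intF (g : 'I_m -> vec -> R) (x : vec) : Prop :=
  exists r : R, 0 < r /\ forall y, enorm (vsub y x) < r -> inF g y.

Definition clarke_stationary (l u : vec) (P : vec -> R) (x : vec) : Prop :=
  inX l u x /\ inZ x /\
  (forall s, inDc l u x s -> (0 <= clarke_dd P x s)%E) /\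
  (forall y, inBz l u x y -> P x <= P y).

Definition EMFCQ (l u : vec) (g : 'I_m -> vec -> R) : Prop :=
  forall x, inX l u x -> inZ x -> ~ in_intF g x ->
    (exists s, inDc l u x s /\
       forall i, 0 <= g i x -> forall xi, in_clarke_subdiff (g i) x xi ->
         dotp xi s < 0)
    \/ (exists d, inDz l u x d /\ viol g (fun i => x i + (d i)%:~R) < viol g x).

End Defs.

(* Every point c of the compact box X has a neighbourhood and an eps_c > 0 such
   that no infeasible point of X ∩ Z in that neighbourhood is Clarke stationary
   for P(.; eps) with eps <= eps_c; a finite subcover then gives eps*.  Near a
   non-integral c there are no points of Z, and near an interior point of F no
   infeasible points.  Under EMFCQ (ii) the integer move d lowers the violation
   by a fixed amount near c, which beats eps times the bounded change of f.
   Under EMFCQ (i) the max formula (the Clarke derivative of a Lipschitz function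
   is attained on its subdifferential, by a finite-dimensional Hahn-Banach
   argument) makes the Clarke derivative of every active constraint along s
   negative, so near c the difference quotients of the violation along s are at
   most -k, and those of P(.; eps) at most -1 once eps is small. *)

From HB Require Import structures.
From mathcomp Require Import all_boot all_order all_algebra.
From mathcomp Require Import classical_sets reals constructive_ereal ereal.
From mathcomp Require Import boolp finmap topology normedtype.
From mathcomp Require Import ring lra zify.
Set Implicit Arguments. Unset Strict Implicit. Unset Printing Implicit Defensive.
Import Order.TTheory GRing.Theory Num.Theory.
Import numFieldTopology.Exports numFieldNormedType.Exports.
Local Open Scope ring_scope.

Lemma sqrtr_le_of_le_sqr (R : rcfType) (a b : R) : 0 <= b -> a <= b ^+ 2 -> Num.sqrt a <= b.
Proof. by move=> b0 /ler_wsqrtr; rewrite sqrtr_sqr ger0_norm. Qed.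

Lemma pos_lower_bound_seq (R : realDomainType) (T : eqType) (s : seq T) (E : T -> R) :
  (forall v, v \in s -> 0 < E v) -> exists2 e, 0 < e & forall v, v \in s -> e <= E v.
Proof.
elim: s => [|a s IH] Epos; first by exists 1.
have [|e e_gt0 e_le] := IH; first by move=> v sv; apply: Epos; rewrite in_cons sv orbT.
exists (Num.min e (E a)); first by rewrite lt_min e_gt0 Epos ?mem_head.
by move=> v; rewrite in_cons ge_min => /predU1P[->|/e_le ->]; rewrite ?lexx ?orbT.
Qed.

Lemma normr_max0_sub (R : realDomainType) (a b : R) :
  `|Num.max 0 a - Num.max 0 b| <= `|a - b|.
Proof.
rewrite !maxEle; case: ifP => a0; case: ifP => b0; rewrite ?subrr ?normr0 //.
- rewrite subr0 !ger0_norm //; move/negbT: b0; rewrite -ltNge; lra.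
- rewrite sub0r normrN (ger0_norm b0) ltr0_norm; move/negbT: a0; rewrite -ltNge; lra.
Qed.

Section Vectors.
Variables (R : realType) (n : nat).
Implicit Types (x y z v w : 'I_n -> R) (t : R).
Notation vzero := (fun _ : 'I_n => 0 : R).

Definition basisv (j : 'I_n) : 'I_n -> R := fun i => (i == j)%:R.

Lemma vscaler0 t : vscale t vzero = vzero.
Proof. by apply: funext => i; rewrite /vscale mulr0. Qed.

Lemma vscaleA t1 t2 v : vscale t1 (vscale t2 v) = vscale (t1 * t2) v.
Proof. by apply: funext => i; rewrite /vscale mulrA. Qed.

Lemma vaddN v : vadd v (vscale (-1) v) = vzero.
Proof. by apply: funext => i; rewrite /vadd /vscale mulN1r subrr. Qed.

Lemma dotp_basisvl j v : dotp (basisv j) v = v j.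
Proof.
rewrite /dotp /basisv (bigD1 j) //= eqxx mul1r big1 ?addr0 // => i /negbTE ij.
by rewrite ij mul0r.
Qed.

Lemma dotpC v w : dotp v w = dotp w v.
Proof. by apply: eq_bigr => i _; rewrite mulrC. Qed.

Lemma dotpZl t v w : dotp (vscale t v) w = t * dotp v w.
Proof. by rewrite /dotp mulr_sumr; apply: eq_bigr => i _; rewrite /vscale mulrA. Qed.

Lemma enorm_ge0 x : 0 <= enorm x.
Proof. exact: sqrtr_ge0. Qed.

Lemma enorm_sqr x : enorm x ^+ 2 = \sum_i x i ^+ 2.
Proof. by rewrite sqr_sqrtr // sumr_ge0 // => i _; rewrite sqr_ge0. Qed.

Lemma normr_le_enorm x i : `|x i| <= enorm x.
Proof.
rewrite -sqrtr_sqr ler_wsqrtr // (bigD1 i) //= lerDl.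
by apply: sumr_ge0 => j _; rewrite sqr_ge0.
Qed.

Lemma enorm_le_sum x : enorm x <= \sum_i `|x i|.
Proof.
apply: sqrtr_le_of_le_sqr; first exact: sumr_ge0.
apply: (proj1 (big_ind2 (fun a b => a <= b ^+ 2 /\ 0 <= b) _ _ _)).
- by rewrite expr0n.
- by move=> a1 b1 a2 b2 [h1 b1p] [h2 b2p]; split; nra.
- by move=> i _; rewrite real_normK ?num_real.
Qed.

Lemma enormZ t x : enorm (vscale t x) = `|t| * enorm x.
Proof.
rewrite /enorm -sqrtr_sqr -sqrtrM ?sqr_ge0 // mulr_sumr.
by congr Num.sqrt; apply: eq_bigr => i _; rewrite exprMn.
Qed.

Lemma enorm_eq0 x : enorm x = 0 -> forall i, x i = 0.
Proof.
by move=> x0 i; apply/normr0_eq0/eqP; rewrite eq_le normr_ge0 -x0 normr_le_enorm.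
Qed.

Lemma dotp_le_enorm x y : dotp x y <= enorm x * enorm y.
Proof.
have [x0|x_neq0] := eqVneq (enorm x) 0.
  by rewrite x0 mul0r /dotp big1 // => i _; rewrite (enorm_eq0 x0) mul0r.
have [y0|y_neq0] := eqVneq (enorm y) 0.
  by rewrite y0 mulr0 /dotp big1 // => i _; rewrite (enorm_eq0 y0) mulr0.
have xy_gt0 : 0 < 2 * (enorm x * enorm y).
  by rewrite !mulr_gt0 // lt_def ?x_neq0 ?y_neq0 enorm_ge0.
rewrite -(ler_pM2l xy_gt0).
have -> : 2 * (enorm x * enorm y) * (enorm x * enorm y) =
    \sum_i (enorm y ^+ 2 * x i ^+ 2 + enorm x ^+ 2 * y i ^+ 2).
  by rewrite big_split /= -!mulr_sumr -!enorm_sqr; ring.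
rewrite /dotp mulr_sumr; apply: ler_sum => i _.
have := sqr_ge0 (enorm y * x i - enorm x * y i); nra.
Qed.

Lemma enorm_add_le x y : enorm (vadd x y) <= enorm x + enorm y.
Proof.
apply: sqrtr_le_of_le_sqr; first by rewrite addr_ge0 ?enorm_ge0.
have -> : \sum_i vadd x y i ^+ 2 = enorm x ^+ 2 + 2 * dotp x y + enorm y ^+ 2.
  rewrite !enorm_sqr /dotp mulr_sumr -!big_split.
  by apply: eq_bigr => i _; rewrite /vadd /=; ring.
have := dotp_le_enorm x y; nra.
Qed.

Lemma enorm_sub_le x y z : enorm (vsub x z) <= enorm (vsub x y) + enorm (vsub y z).
Proof.
have -> : vsub x z = vadd (vsub x y) (vsub y z).
  by apply: funext => i; rewrite /vadd /vsub; ring.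
exact: enorm_add_le.
Qed.

Lemma enorm_subxx x : enorm (vsub x x) = 0.
Proof.
have -> : vsub x x = vscale 0 x by apply: funext => i; rewrite /vscale /vsub; ring.
by rewrite enormZ normr0 mul0r.
Qed.

End Vectors.

Arguments basisv {R n} j.

Section HahnBanach.
Variables (R : realType) (n : nat).
Implicit Types (p q : ('I_n -> R) -> R) (v w e : 'I_n -> R) (t a c : R).
Notation vzero := (fun _ : 'I_n => 0 : R).

Definition sublinear p :=
  (forall v w, p (vadd v w) <= p v + p w) /\
  (forall t v, 0 < t -> p (vscale t v) <= t * p v).

Definition affine_along p w a := forall v t, p (vadd v (vscale t w)) = p v + t * a.

Section Sublinear.
Variables (p : ('I_n -> R) -> R) (p_sub : sublinear p).

Lemma sublinear0 : p vzero = 0.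
Proof.
have := p_sub.2 2 vzero ltac:(lra); have := p_sub.2 (1/2) vzero ltac:(lra).
rewrite !vscaler0; lra.
Qed.

Lemma sublinear_opp_le v : - p (vscale (-1) v) <= p v.
Proof. by have := p_sub.1 v (vscale (-1) v); rewrite vaddN sublinear0; lra. Qed.

Lemma sublinearZ t v : 0 < t -> p (vscale t v) = t * p v.
Proof.
move=> t_gt0; apply/eqP; rewrite eq_le (p_sub.2 _ _ t_gt0) /=.
have := p_sub.2 t^-1 (vscale t v) ltac:(by rewrite invr_gt0).
rewrite vscaleA mulVf ?gt_eqF // (_ : vscale 1 v = v); last first.
  by apply: funext => i; rewrite /vscale mul1r.
by rewrite -(ler_pM2l t_gt0) mulrA mulfV ?gt_eqF // mul1r.
Qed.

Variables (e : 'I_n -> R) (c : R).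
Hypotheses (c_ge : - p (vscale (-1) e) <= c) (c_le : c <= p e).

Lemma slope_le_sublinear t : t * c <= p (vscale t e).
Proof.
case: (ltrgtP t 0) => [t_lt0|t_gt0|->].
- rewrite (_ : vscale t e = vscale (- t) (vscale (-1) e)); last first.
    by rewrite vscaleA mulrN1 opprK.
  rewrite sublinearZ ?oppr_gt0 //.
  have : 0 <= - t * (c + p (vscale (-1) e)) by apply: mulr_ge0; move: c_ge; lra.
  lra.
- rewrite sublinearZ //.
  have : 0 <= t * (p e - c) by apply: mulr_ge0; move: c_le; lra.
  lra.
- rewrite mul0r (_ : vscale 0 e = vzero) ?sublinear0 //.
  by apply: funext => i; rewrite /vscale mul0r.
Qed.

Local Open Scope classical_set_scope.

(* The one-dimensional Hahn--Banach step; the bounds on [c] keep the infimum finite. *)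
Definition hb_ext v := inf [set p (vadd v (vscale t e)) - t * c | t in [set: R]].

Lemma hb_ext_le v t : hb_ext v <= p (vadd v (vscale t e)) - t * c.
Proof.
apply: ge_inf; last by exists t.
exists (- p (vscale (-1) v)) => _ [t' _ <-].
have := p_sub.1 (vadd v (vscale t' e)) (vscale (-1) v).
rewrite (_ : vadd _ _ = vscale t' e); last first.
  by apply: funext => i; rewrite /vadd /vscale; ring.
have := slope_le_sublinear t'; lra.
Qed.

Lemma hb_ext_ge v r : (forall t, r <= p (vadd v (vscale t e)) - t * c) -> r <= hb_ext v.
Proof.
move=> r_lb; apply: lb_le_inf; first by exists (p (vadd v (vscale 0 e)) - 0 * c), 0.
by move=> _ [t _ <-].
Qed.

Lemma hb_ext_le_p v : hb_ext v <= p v.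
Proof.
have := hb_ext_le v 0; rewrite mul0r subr0 (_ : vadd v _ = v) //.
by apply: funext => i; rewrite /vadd /vscale mul0r addr0.
Qed.

Lemma hb_ext_affine_along_e : affine_along hb_ext e c.
Proof.
move=> v tau; apply/eqP; rewrite eq_le; apply/andP; split.
- rewrite -lerBlDr; apply: hb_ext_ge => t.
  have := hb_ext_le (vadd v (vscale tau e)) (t - tau).
  rewrite (_ : vadd (vadd v _) _ = vadd v (vscale t e)); first lra.
  by apply: funext => i; rewrite /vadd /vscale; ring.
- apply: hb_ext_ge => t.
  have := hb_ext_le v (tau + t).
  rewrite (_ : vadd v _ = vadd (vadd v (vscale tau e)) (vscale t e)); first lra.
  by apply: funext => i; rewrite /vadd /vscale; ring.
Qed.

Lemma hb_ext_affine_along w a : affine_along p w a -> affine_along hb_ext w a.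
Proof.
move=> p_aff v tau.
have shift t : vadd (vadd v (vscale tau w)) (vscale t e) =
    vadd (vadd v (vscale t e)) (vscale tau w).
  by apply: funext => i; rewrite /vadd /vscale; ring.
apply/eqP; rewrite eq_le; apply/andP; split.
- rewrite -lerBlDr; apply: hb_ext_ge => t.
  by have := hb_ext_le (vadd v (vscale tau w)) t; rewrite shift p_aff; lra.
- apply: hb_ext_ge => t.
  by rewrite shift p_aff; have := hb_ext_le v t; lra.
Qed.

Lemma hb_ext_sublinear : sublinear hb_ext.
Proof.
split=> [v w|lam v lam_gt0].
- rewrite -lerBlDr; apply: hb_ext_ge => t1.
  rewrite lerBlDr -lerBlDl; apply: hb_ext_ge => t2.
  have := hb_ext_le (vadd v w) (t1 + t2).
  have := p_sub.1 (vadd v (vscale t1 e)) (vadd w (vscale t2 e)).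
  rewrite (_ : vadd (vadd v _) _ = vadd (vadd v w) (vscale (t1 + t2) e)); first lra.
  by apply: funext => i; rewrite /vadd /vscale; ring.
- rewrite mulrC -ler_pdivrMr //; apply: hb_ext_ge => t.
  rewrite ler_pdivrMr //.
  have := hb_ext_le (vscale lam v) (lam * t).
  rewrite (_ : vadd (vscale lam v) _ = vscale lam (vadd v (vscale t e))); last first.
    by apply: funext => i; rewrite /vadd /vscale; ring.
  rewrite sublinearZ //; nra.
Qed.

End Sublinear.

Lemma sublinear_affine_seq p (ws : seq ('I_n -> R)) : sublinear p -> exists q,
  [/\ sublinear q, forall v, q v <= p v,
      forall w a, affine_along p w a -> affine_along q w a &
      forall w, w \in ws -> exists a, affine_along q w a].
Proof.
move=> p_sub; elim: ws => [|w ws [q [q_sub q_le q_aff q_ws]]]; first by exists p.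
have q_opp := sublinear_opp_le q_sub w.
exists (hb_ext q w (q w)); split.
- exact: hb_ext_sublinear.
- by move=> v; apply: le_trans (hb_ext_le_p q_sub q_opp (lexx _) v) (q_le v).
- by move=> w' a /q_aff; apply: hb_ext_affine_along.
- move=> w'; rewrite in_cons => /predU1P[->|/q_ws[a aff]].
    by exists (q w); apply: hb_ext_affine_along_e.
  by exists a; apply: hb_ext_affine_along.
Qed.

Lemma affine_basisv_linear q : sublinear q ->
  (forall j, exists a, affine_along q (basisv j) a) ->
  forall v, q v = dotp v (fun j => q (basisv j)).
Proof.
move=> q_sub q_aff v.
have slope j : affine_along q (basisv j) (q (basisv j)).
  have [a aff] := q_aff j; have := aff vzero 1.
  rewrite sublinear0 // add0r mul1r (_ : vadd _ _ = basisv j) => [->|] //.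
  by apply: funext => i; rewrite /vadd /vscale add0r mul1r.
have partial (r : seq 'I_n) :
    q (fun i => \sum_(j <- r) v j * basisv j i) = \sum_(j <- r) v j * q (basisv j).
  elim: r => [|j r IH].
    rewrite big_nil (_ : (fun i => _) = vzero) ?sublinear0 //.
    by apply: funext => i; rewrite big_nil.
  rewrite big_cons -IH addrC -slope; congr q; apply: funext => i.
  by rewrite /vadd /vscale big_cons addrC.
have := partial (index_enum 'I_n); rewrite (_ : (fun i => _) = v) => [->|].
  by apply: eq_bigr => j _.
apply: funext => i; rewrite (bigD1 i) //= /basisv eqxx mulr1 big1 ?addr0 //.
by move=> j /negbTE; rewrite eq_sym => ->; rewrite mulr0.
Qed.

Lemma hahn_banach_sublinear p s : sublinear p ->
  exists xi, (forall v, dotp v xi <= p v) /\ dotp s xi = p s.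
Proof.
move=> p_sub; have p_opp := sublinear_opp_le p_sub s.
have [q [q_sub q_le q_aff q_basis]] :=
  sublinear_affine_seq [seq basisv j | j <- enum 'I_n] (hb_ext_sublinear p_sub p_opp (lexx _)).
have q_lin := affine_basisv_linear q_sub (fun j => q_basis _ (map_f _ (mem_enum _ j))).
exists (fun j => q (basisv j)); split=> [v|].
  by rewrite -q_lin; apply: le_trans (q_le v) (hb_ext_le_p p_sub p_opp (lexx _) v).
have := q_aff _ _ (hb_ext_affine_along_e p_sub p_opp (lexx _)) vzero 1.
rewrite -q_lin sublinear0 // add0r mul1r => <-; congr q.
by apply: funext => i; rewrite /vadd /vscale add0r mul1r.
Qed.

End HahnBanach.

Section ContinuousMoves.
Variables (R : realType) (n : nat) (Iz : {set 'I_n}).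
Implicit Types (x y z s : 'I_n -> R) (t : R).

Lemma same_z_trans y x z : same_z Iz x y -> same_z Iz y z -> same_z Iz x z.
Proof. by move=> xy yz i iz; rewrite xy // yz. Qed.

Lemma same_z_step y t s : zero_z Iz s -> same_z Iz (vadd y (vscale t s)) y.
Proof. by move=> s_z i iz; rewrite /vadd /vscale s_z // mulr0 addr0. Qed.

Lemma enorm_step y t s : 0 <= t -> enorm (vsub (vadd y (vscale t s)) y) = t * enorm s.
Proof.
move=> t_ge0; rewrite (_ : vsub _ y = vscale t s) ?enormZ ?ger0_norm //.
by apply: funext => i; rewrite /vsub /vadd; ring.
Qed.

Definition cproj x : 'I_n -> R := fun i => if i \in Iz then 0 else x i.

Lemma cproj_zero_z x : zero_z Iz (cproj x).
Proof. by move=> i iz; rewrite /cproj iz. Qed.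

Lemma cproj_id x : zero_z Iz x -> cproj x = x.
Proof. by move=> x_z; apply: funext => i; rewrite /cproj; case: ifP => // /x_z ->. Qed.

Lemma cprojD x y : cproj (vadd x y) = vadd (cproj x) (cproj y).
Proof. by apply: funext => i; rewrite /cproj /vadd; case: ifP; rewrite ?addr0. Qed.

Lemma cprojZ t x : cproj (vscale t x) = vscale t (cproj x).
Proof. by apply: funext => i; rewrite /cproj /vscale; case: ifP; rewrite ?mulr0. Qed.

Lemma same_z_inZ y c : inZ Iz y -> inZ Iz c -> enorm (vsub y c) < 1 -> same_z Iz y c.
Proof.
move=> yZ cZ yc i iz; have := le_lt_trans (normr_le_enorm (vsub y c) i) yc.
rewrite /vsub; have [a ->] := yZ i iz; have [b ->] := cZ i iz.
by rewrite -intrB -intr_norm ltrz1 => ab; congr intmul; lia.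
Qed.

End ContinuousMoves.

Section LipschitzContinuous.
Variables (R : realType) (n : nat) (Iz : {set 'I_n}).
Variables (h : ('I_n -> R) -> R) (L : R).
Hypothesis h_lip : lipschitz_c Iz L h.
Implicit Types (x y : 'I_n -> R).

Lemma lipschitz_c_ge x y : same_z Iz y x -> h x - L * enorm (vsub y x) <= h y.
Proof. by move/h_lip; rewrite ler_norml => /andP[]; lra. Qed.

Lemma lipschitz_c_le x y : same_z Iz y x -> h y <= h x + L * enorm (vsub y x).
Proof. by move/h_lip; rewrite ler_norml => /andP[]; lra. Qed.

Lemma lipschitz_c_lt0_nbhs x : 0 < L -> h x < 0 ->
  exists2 r, 0 < r & forall y, same_z Iz y x -> enorm (vsub y x) < r -> h y < 0.
Proof.
move=> L_gt0 hx_lt0; exists (- h x / L); first by rewrite divr_gt0 // oppr_gt0.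
move=> y yx; rewrite ltr_pdivlMr // => yx_lt; have := lipschitz_c_le yx; lra.
Qed.

End LipschitzContinuous.

Section ClarkeDerivative.
Variables (R : realType) (n : nat) (Iz : {set 'I_n}).
Variables (h : ('I_n -> R) -> R) (L : R) (x : 'I_n -> R).
Hypothesis h_lip : lipschitz_c Iz L h.
Implicit Types (y s v w : 'I_n -> R) (t r : R).

Definition dquot y t s : R := (h (vadd y (vscale t s)) - h y) / t.

Definition dquot_ub s r : Prop := exists2 d, 0 < d & forall y t,
  same_z Iz y x -> enorm (vsub y x) < d -> 0 < t -> t < d -> dquot y t s <= r.

Lemma clarke_dd_le s r : dquot_ub s r -> (clarke_dd Iz h x s <= r%:E)%E.
Proof.
case=> d d_gt0 ub; apply: ge_ereal_inf; eexists; first by exists d.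
apply: ge_ereal_sup => _ [y [t [yx [yd [/andP[t_gt0 td] ->]]]]].
by rewrite lee_fin; apply: ub.
Qed.

Lemma dquot_ub_lt s r : (clarke_dd Iz h x s < r%:E)%E -> dquot_ub s r.
Proof.
case/ereal_inf_lt => _ [d d_gt0 <-] sup_lt; exists d => // y t yx yd t_gt0 td.
rewrite -lee_fin; apply: le_trans (ltW sup_lt); apply: ereal_sup_ubound.
by exists y, t; do 3 (split => //); rewrite t_gt0 td.
Qed.

Lemma normr_dquot_le y t s : zero_z Iz s -> 0 < t -> `|dquot y t s| <= L * enorm s.
Proof.
move=> s_z t_gt0; rewrite normrM normfV (gtr0_norm t_gt0) ler_pdivrMr //.
apply: le_trans (h_lip (same_z_step y t s_z)) _.
by rewrite (enorm_step _ _ (ltW t_gt0)) mulrA mulrAC.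
Qed.

Lemma dquot_ub_lip s : zero_z Iz s -> dquot_ub s (L * enorm s).
Proof.
move=> s_z; exists 1 => // y t _ _ t_gt0 _.
exact: le_trans (ler_norm _) (normr_dquot_le y s_z t_gt0).
Qed.

Lemma clarke_dd_ge s : zero_z Iz s -> ((- (L * enorm s))%:E <= clarke_dd Iz h x s)%E.
Proof.
move=> s_z; apply: le_ereal_inf_tmp => _ [d /= d_gt0 <-].
apply: le_ereal_sup_tmp; exists (dquot x (d / 2) s)%:E.
  by exists x, (d / 2); rewrite enorm_subxx; do 3 (split => //); apply/andP; lra.
rewrite lee_fin; have := normr_dquot_le x s_z (_ : 0 < d / 2).
by rewrite ler_norml => /(_ ltac:(lra)) /andP[].
Qed.

(* The Clarke derivative as a real function of all directions, so that Hahn--Banach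
   applies; [cproj] discards the integer components, along which no move is allowed. *)
Definition clarke_c v : R := fine (clarke_dd Iz h x (cproj Iz v)).

Lemma clarke_dd_cproj v : clarke_dd Iz h x (cproj Iz v) = (clarke_c v)%:E.
Proof.
have v_z : zero_z Iz (cproj Iz v) := cproj_zero_z v.
have := clarke_dd_ge v_z; have := clarke_dd_le (dquot_ub_lip v_z).
by rewrite /clarke_c; case: (clarke_dd Iz h x _).
Qed.

Lemma clarke_ddE s : zero_z Iz s -> clarke_dd Iz h x s = (clarke_c s)%:E.
Proof. by move=> s_z; rewrite -clarke_dd_cproj cproj_id. Qed.

Lemma dquot_ub_clarke_c v e : 0 < e -> dquot_ub (cproj Iz v) (clarke_c v + e).
Proof. by move=> e_gt0; apply: dquot_ub_lt; rewrite clarke_dd_cproj lte_fin ltrDl. Qed.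

Lemma dquot_ub_add v w a b : zero_z Iz v -> dquot_ub v a -> dquot_ub w b ->
  dquot_ub (vadd v w) (a + b).
Proof.
move=> v_z [dv dv_gt0 ubv] [dw dw_gt0 ubw].
have nv_gt0 : 0 < 1 + enorm v by have := enorm_ge0 v; lra.
exists (Num.min dv (dw / (2 * (1 + enorm v)))).
  by rewrite lt_min dv_gt0 /= divr_gt0 // mulr_gt0.
move=> y t yx; rewrite !lt_min => /andP[ydv ydw] t_gt0 /andP[tdv tdw].
have -> : dquot y t (vadd v w) = dquot (vadd y (vscale t v)) t w + dquot y t v.
  rewrite /dquot -mulrDl (_ : vadd y _ = vadd (vadd y (vscale t v)) (vscale t w)).
    by congr (_ / _); ring.
  by apply: funext => i; rewrite /vadd /vscale; ring.
rewrite addrC; apply: lerD; first exact: ubv.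
move: ydw tdw; set D := dw / _ => ydw tdw.
have dwD : dw = D * (2 * (1 + enorm v)) by rewrite /D mulfVK ?gt_eqF ?mulr_gt0.
have nv_ge0 := enorm_ge0 v; have nyx_ge0 := enorm_ge0 (vsub y x).
apply: ubw; [exact: same_z_trans (same_z_step y t v_z) yx| |by []|nra].
apply: le_lt_trans (enorm_sub_le _ y _) _.
rewrite enorm_step ?ltW //; nra.
Qed.

Lemma dquot_ub_scale v a lam : 0 < lam -> dquot_ub v a ->
  dquot_ub (vscale lam v) (lam * a).
Proof.
move=> lam_gt0 [d d_gt0 ub]; exists (Num.min d (d / lam)).
  by rewrite lt_min d_gt0 divr_gt0.
move=> y t yx; rewrite !lt_min => /andP[yd _] t_gt0 /andP[_ tdl].
have -> : dquot y t (vscale lam v) = lam * dquot y (lam * t) v.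
  rewrite /dquot vscaleA [t * lam]mulrC; set A := (_ - _); field.
  by rewrite !gt_eqF.
rewrite ler_pM2l //; apply: ub => //; first exact: mulr_gt0.
by move: tdl; rewrite ltr_pdivlMr // mulrC.
Qed.

Lemma clarke_c_sublinear : sublinear clarke_c.
Proof.
split=> [v w|lam v lam_gt0]; apply/ler_addgt0Pr => e e_gt0.
- have e2_gt0 : 0 < e / 2 by lra.
  have := dquot_ub_add (cproj_zero_z _) (dquot_ub_clarke_c v e2_gt0)
    (dquot_ub_clarke_c w e2_gt0).
  by rewrite -cprojD => /clarke_dd_le; rewrite clarke_dd_cproj lee_fin; lra.
- have := dquot_ub_scale lam_gt0 (dquot_ub_clarke_c v (divr_gt0 e_gt0 lam_gt0)).
  rewrite -cprojZ => /clarke_dd_le; rewrite clarke_dd_cproj lee_fin.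
  by rewrite mulrDr mulrCA mulfV ?gt_eqF // mulr1.
Qed.

Lemma clarke_c_eq0 v : (forall i, i \notin Iz -> v i = 0) -> clarke_c v = 0.
Proof.
move=> v_c; have v0 : cproj Iz v = vscale 0 v.
  by apply: funext => i; rewrite /cproj /vscale mul0r; case: ifPn => // /v_c.
have v_z : zero_z Iz (cproj Iz v) := cproj_zero_z v.
have := clarke_dd_ge v_z; have := clarke_dd_le (dquot_ub_lip v_z).
rewrite clarke_dd_cproj v0 enormZ normr0 mul0r mulr0 oppr0 !lee_fin => le0 ge0.
by apply/eqP; rewrite eq_le le0 ge0.
Qed.

(* The max formula for the Clarke derivative, by Hahn--Banach applied to [clarke_c]. *)
Lemma clarke_dd_attained s : zero_z Iz s ->
  exists xi, in_clarke_subdiff Iz h x xi /\ clarke_dd Iz h x s = (dotp s xi)%:E.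
Proof.
move=> s_z; have [xi [xi_le xi_s]] := hahn_banach_sublinear s clarke_c_sublinear.
exists xi; split; last by rewrite clarke_ddE // xi_s.
split=> [j jz|s' s'_z]; last by rewrite clarke_ddE // lee_fin xi_le.
have e_c t i : i \notin Iz -> vscale t (basisv j) i = 0.
  move=> iz; rewrite /vscale /basisv (_ : i == j = false) ?mulr0 //.
  by apply: contraNF iz => /eqP ->.
have := xi_le (vscale 1 (basisv j)); have := xi_le (vscale (-1) (basisv j)).
rewrite !dotpZl !dotp_basisvl !clarke_c_eq0; try by move=> i; apply: e_c.
by move=> le0 ge0; apply/eqP; rewrite eq_le; apply/andP; split; lra.
Qed.

Lemma clarke_dd_lt0 s : zero_z Iz s ->
  (forall xi, in_clarke_subdiff Iz h x xi -> dotp xi s < 0) -> (clarke_dd Iz h x s < 0%:E)%E.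
Proof.
move=> s_z neg; have [xi [xi_sub ->]] := clarke_dd_attained s_z.
by rewrite lte_fin dotpC; apply: neg.
Qed.

Lemma clarke_dd_lt0_descent s : zero_z Iz s -> (clarke_dd Iz h x s < 0%:E)%E ->
  exists2 r, 0 < r & exists2 k, 0 < k & forall y t,
    same_z Iz y x -> enorm (vsub y x) < r -> 0 < t -> t < r ->
    h (vadd y (vscale t s)) <= h y - k * t.
Proof.
move=> s_z; rewrite clarke_ddE // lte_fin => neg.
have [r r_gt0 ub] : dquot_ub s (clarke_c s / 2).
  by apply: dquot_ub_lt; rewrite clarke_ddE // lte_fin; lra.
exists r => //; exists (- (clarke_c s / 2)); first lra.
move=> y t yx yr t_gt0 tr; have := ub y t yx yr t_gt0 tr.
by rewrite /dquot ler_pdivrMr //; lra.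
Qed.

End ClarkeDerivative.

Section CompactBox.
Variables (R : realType) (n : nat) (l u : 'I_n -> R).
Local Open Scope classical_set_scope.

Lemma box_uniform_pos (Q : R -> ('I_n -> R) -> Prop) :
  (forall e e' y, e' <= e -> Q e y -> Q e' y) ->
  (forall c, inX l u c -> exists2 r, 0 < r & exists2 e, 0 < e &
     forall y, inX l u y -> enorm (vsub y c) < r -> Q e y) ->
  exists2 e, 0 < e & forall y, inX l u y -> Q e y.
Proof.
move=> Q_anti Q_loc.
pose box := [set v : 'rV[R]_n | forall i, `[l i, u i] (v ord0 i)].
have box_compact : compact box.
  by apply: (@rV_compact _ _ (fun i => `[l i, u i])) => i; apply: segment_compact.
pose vec_of (v : 'rV[R]_n) : 'I_n -> R := fun i => v ord0 i.
have box_inX v : box v -> inX l u (vec_of v).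
  by move=> bv i; have := bv i; rewrite /= in_itv.
have : forall v, exists re : R * R, box v ->
    0 < re.1 /\ 0 < re.2 /\
    forall y, inX l u y -> enorm (vsub y (vec_of v)) < re.1 -> Q re.2 y.
  move=> v; have [bv|] := pselect (box v); last by exists (1, 1).
  by have [r r_gt0 [e e_gt0 loc]] := Q_loc _ (box_inX v bv); exists (r, e).
case/choice => re re_spec.
pose N : R := n.+1%:R; have N_gt0 : 0 < N by rewrite ltr0n.
pose cell v := ball v ((re v).1 / N).
have box_cover : box `<=` cover box cell.
  move=> v bv; exists v => //; apply: ballxx.
  exact: divr_gt0 (re_spec v bv).1 N_gt0.
move: box_compact; rewrite compact_cover => /(_ _ box cell (fun i _ => ball_open _ _) box_cover).
move=> [D D_box D_cover].
have [e e_gt0 e_le] := @pos_lower_bound_seq _ _ (enum_fset D) (fun v => (re v).2)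
  (fun v vD => (re_spec v (set_mem (D_box v vD))).2.1).
exists e => // y yX; pose ry : 'rV[R]_n := \row_i y i.
have [v vD ry_cell] : cover [set` D] cell ry.
  by apply: D_cover => i; rewrite /ry mxE /= in_itv; apply: yX.
have [r_gt0 [_ loc]] := re_spec v (set_mem (D_box v vD)).
apply: Q_anti (e_le v vD) (loc y yX _).
have coord i : `|vsub y (vec_of v) i| <= (re v).1 / N.
  by move: ry_cell => /= [_ /(_ ord0 i)]; rewrite /ry mxE /vsub /vec_of distrC => /ltW.
apply: le_lt_trans (enorm_le_sum _) _; apply: le_lt_trans (ler_sum _ (fun i _ => coord i)) _.
rewrite sumr_const card_ord -mulr_natr /N mulrAC ltr_pdivrMr // ltr_pM2l //.
by rewrite ltr_nat.
Qed.

End CompactBox.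

Section Penalty.
Variables (R : realType) (n m : nat) (Iz : {set 'I_n}) (l u : 'I_n -> R).
Variables (f : ('I_n -> R) -> R) (g : 'I_m -> ('I_n -> R) -> R).
Implicit Types (c x y z s : 'I_n -> R) (d : 'I_n -> int).

Definition nonstationary_upto e y := forall eps, 0 < eps -> eps <= e ->
  inZ Iz y -> ~ inF g y -> ~ clarke_stationary Iz l u (penalty f g eps) y.

Definition locally_nonstationary c := exists2 r, 0 < r & exists2 e, 0 < e &
  forall y, inX l u y -> enorm (vsub y c) < r -> nonstationary_upto e y.

Lemma nonstationary_upto_le e e' y :
  e' <= e -> nonstationary_upto e y -> nonstationary_upto e' y.
Proof. by move=> e'_le ns eps eps_gt0 eps_le; apply: ns => //; apply: le_trans e'_le. Qed.

Lemma locally_nonstationary_notZ c : ~ inZ Iz c -> locally_nonstationary c.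
Proof.
move=> /existsNP[i /not_implyP[iz ci_nint]].
set k := Num.floor (c i).
have /andP[k_le k_lt] : k%:~R <= c i < (k + 1)%:~R := floor_itv (c i).
have k_lt' : k%:~R < c i.
  by rewrite lt_neqAle k_le andbT; apply/eqP => ck; apply: ci_nint; exists k.
exists (Num.min (c i - k%:~R) ((k + 1)%:~R - c i)).
  by rewrite lt_min !subr_gt0 k_lt' k_lt.
exists 1 => // y _ yc eps _ _ yZ _ _; have [j yj] := yZ i iz.
have := le_lt_trans (normr_le_enorm (vsub y c) i) yc.
rewrite /vsub lt_min !ltr_norml yj => /andP[/andP[lo _] /andP[_ hi]].
have : k < j < k + 1 by rewrite -!(ltr_int R); apply/andP; lra.
lia.
Qed.

Lemma locally_nonstationary_intF c : in_intF g c -> locally_nonstationary c.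
Proof.
case=> r [r_gt0 feas]; exists r => //; exists 1 => // y _ yc eps _ _ _ yF.
by case: yF; apply: feas.
Qed.

Lemma inBz_int_move c d y : inDz Iz l u c d -> inX l u y -> same_z Iz y c ->
  inBz Iz l u y (fun i => y i + (d i)%:~R).
Proof.
move=> [d_c [d_gcd [cd_X cd_Z]]] yX yc; exists d; do 4 split=> //.
- move=> i; have [iz|ic] := boolP (i \in Iz); first by rewrite yc //; apply: cd_X.
  by rewrite d_c // addr0; apply: yX.
- by move=> i iz; rewrite yc //; apply: cd_Z.
Qed.

Lemma viol_sub_le_penalty eps y z : 0 < eps ->
  penalty f g eps y <= penalty f g eps z -> viol g y - viol g z <= eps * (f z - f y).
Proof.
move=> eps_gt0 /(ler_wpM2l (ltW eps_gt0)).
by rewrite /penalty !mulrDr !mulrA mulfV ?gt_eqF // !mul1r; lra.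
Qed.

Lemma inDc_nbhs c s : inX l u c -> inDc Iz l u c s ->
  exists2 r, 0 < r & forall y, enorm (vsub y c) < r -> inDc Iz l u y s.
Proof.
move=> cX [s_z [s_l s_u]].
pose rho j := Num.min (if c j == l j then 1 else c j - l j)
                      (if c j == u j then 1 else u j - c j).
have rho_gt0 j : 0 < rho j.
  have /andP[lc cu] := cX j; rewrite lt_min.
  by apply/andP; split; case: eqP => [//|/eqP]; rewrite subr_gt0 lt_def 1?eq_sym => ->.
have [r r_gt0 r_le] := pos_lower_bound_seq (fun j (_ : j \in enum 'I_n) => rho_gt0 j).
exists r => // y yc; have near j : `|y j - c j| < rho j.
  exact: le_lt_trans (normr_le_enorm (vsub y c) j) (lt_le_trans yc (r_le j (mem_enum _ _))).
split=> //; split=> j jc yj; have /andP[lc cu] := cX j.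
- apply: s_l => //; apply/eqP/negPn/negP => cl; move: (near j).
  by rewrite /rho (negbTE cl) yj distrC ger0_norm ?subr_ge0 // lt_min ltxx.
- apply: s_u => //; apply/eqP/negPn/negP => cu'; move: (near j).
  by rewrite /rho (negbTE cu') yj ger0_norm ?subr_ge0 // lt_min ltxx andbF.
Qed.

Definition constraint_descent c s r k i := forall y,
  same_z Iz y c -> enorm (vsub y c) < r ->
  (g i c < 0 -> g i y < 0) /\
  (0 <= g i c -> forall t, 0 < t -> t < r -> g i (vadd y (vscale t s)) <= g i y - k * t).

Lemma constraint_descent_le c s r r' k k' i : r' <= r -> k' <= k ->
  constraint_descent c s r k i -> constraint_descent c s r' k' i.
Proof.
move=> r'_le k'_le desc y yc yr'; have [neg dec] := desc y yc (lt_le_trans yr' r'_le).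
split=> // gi_ge0 t t_gt0 tr'; apply: le_trans (dec gi_ge0 t t_gt0 (lt_le_trans tr' r'_le)) _.
by rewrite lerD2l lerN2 ler_pM2r.
Qed.

Section LipschitzData.
Variable L : R.
Hypotheses (L_gt0 : 0 < L) (f_lip : lipschitz_c Iz L f)
  (g_lip : forall i, lipschitz_c Iz L (g i)).

Lemma viol_lip x y : same_z Iz x y ->
  `|viol g x - viol g y| <= m%:R * L * enorm (vsub x y).
Proof.
move=> xy; rewrite /viol -sumrB; apply: le_trans (ler_norm_sum _ _ _) _.
apply: le_trans (_ : _ <= \sum_(i < m) L * enorm (vsub x y)) _.
  by apply: ler_sum => i _; apply: le_trans (normr_max0_sub _ _) (g_lip i xy).
by rewrite sumr_const card_ord -mulrA mulr_natl.
Qed.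

Lemma locally_nonstationary_int_move c d : inX l u c -> inZ Iz c -> inDz Iz l u c d ->
  viol g (fun i => c i + (d i)%:~R) < viol g c -> locally_nonstationary c.
Proof.
move=> cX cZ c_d; set cd := fun i => _ => viol_lt.
set D := viol g c - viol g cd; have D_gt0 : 0 < D by rewrite subr_gt0.
set M := `|f cd - f c|; have M_ge0 : 0 <= M := normr_ge0 _.
set K := m%:R * L + 1; have K_gt0 : 0 < K.
  by rewrite /K; have := mulr_ge0 (ler0n R m) (ltW L_gt0); lra.
exists (Num.min 1 (D / (4 * K))); first by rewrite lt_min ltr01 divr_gt0 ?mulr_gt0.
have N_gt0 : 0 < 4 * (M + 2 * L + 1) by move: L_gt0; lra.
exists (D / (4 * (M + 2 * L + 1))); first by rewrite divr_gt0.
move=> y yX; rewrite lt_min => /andP[yc_lt1 yc_ltK] eps eps_gt0 eps_le yZ _.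
move=> [_ [_ [_ Bz_min]]]; have yc := same_z_inZ yZ cZ yc_lt1.
have := viol_sub_le_penalty eps_gt0 (Bz_min _ (inBz_int_move c_d yX yc)).
set yd := fun i => _; set E := enorm (vsub y c) in yc_lt1 yc_ltK *.
have ydc : same_z Iz yd cd by move=> i iz; rewrite /yd /cd yc.
have E_eq : enorm (vsub yd cd) = E.
  by congr enorm; apply: funext => i; rewrite /vsub /yd /cd; ring.
have E_ge0 : 0 <= E := enorm_ge0 _.
have mLE_le : m%:R * L * E <= D / 4.
  move: yc_ltK; rewrite ltr_pdivlMr ?mulr_gt0 // => KE.
  have : m%:R * L * E <= K * E by rewrite ler_wpM2r // lerDl.
  lra.
have f_diff : f yd - f y <= M + 2 * L + 1.
  have : L * E <= L by rewrite ler_piMr ?ltW.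
  have := f_lip yc; have := f_lip ydc; have := ler_norm (f cd - f c).
  rewrite E_eq -/E -/M !ler_norml; lra.
have eps_f : eps * (f yd - f y) <= D / 4.
  apply: le_trans (ler_wpM2l (ltW eps_gt0) f_diff) _.
  by move: eps_le; rewrite ler_pdivlMr //; lra.
have := viol_lip yc; have := viol_lip ydc; move: mLE_le eps_f.
by rewrite E_eq -/E /D !ler_norml; lra.
Qed.

Lemma constraint_descent_exists c s i : zero_z Iz s ->
  (0 <= g i c -> forall xi, in_clarke_subdiff Iz (g i) c xi -> dotp xi s < 0) ->
  exists2 r, 0 < r & exists2 k, 0 < k & constraint_descent c s r k i.
Proof.
move=> s_z dir; have [gi_lt0|gi_ge0] := ltP (g i c) 0.
  have [r r_gt0 neg] := lipschitz_c_lt0_nbhs (g_lip i) L_gt0 gi_lt0.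
  exists r => //; exists 1 => // y yc yr; split=> [_|]; first exact: neg.
  by rewrite leNgt gi_lt0.
have := clarke_dd_lt0 (g_lip i) s_z (dir gi_ge0).
move=> /(clarke_dd_lt0_descent (g_lip i) s_z) [r r_gt0 [k k_gt0 dec]].
exists r => //; exists k => // y yc yr; split=> [|_ t]; last exact: dec.
by rewrite ltNge gi_ge0.
Qed.

Lemma uniform_descent_exists c s : zero_z Iz s ->
  (forall i, 0 <= g i c -> forall xi, in_clarke_subdiff Iz (g i) c xi -> dotp xi s < 0) ->
  exists2 r, 0 < r & exists2 k, 0 < k & forall i, constraint_descent c s r k i.
Proof.
move=> s_z dir.
have local i : exists rk : R * R, 0 < rk.1 /\ 0 < rk.2 /\ constraint_descent c s rk.1 rk.2 i.
  by have [r r_gt0 [k k_gt0 desc]] := constraint_descent_exists s_z (dir i); exists (r, k).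
have [rk rk_spec] := choice local.
have [r r_gt0 r_le] := pos_lower_bound_seq (fun i (_ : i \in enum 'I_m) => (rk_spec i).1).
have [k k_gt0 k_le] := pos_lower_bound_seq (fun i (_ : i \in enum 'I_m) => (rk_spec i).2.1).
exists r => //; exists k => // i.
by apply: constraint_descent_le (rk_spec i).2.2; [apply: r_le | apply: k_le]; rewrite mem_enum.
Qed.

Section DescentDirection.
Variables (c s : 'I_n -> R) (r k : R).
Hypotheses (s_z : zero_z Iz s) (k_gt0 : 0 < k)
  (desc : forall i, constraint_descent c s r k i).

Lemma viol_descent y t (j : 'I_m) : same_z Iz y c ->
  enorm (vsub y c) < r -> enorm (vsub (vadd y (vscale t s)) c) < r -> 0 < t -> t < r ->
  0 < g j y -> 0 < g j (vadd y (vscale t s)) ->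
  viol g (vadd y (vscale t s)) - viol g y <= - (k * t).
Proof.
move=> yc yr zr t_gt0 tr gjy gjz; set z := vadd y (vscale t s) in zr gjz *.
have zc : same_z Iz z c := same_z_trans (same_z_step y t s_z) yc.
have gj_ge0 : 0 <= g j c.
  by rewrite leNgt; apply/negP => /(desc j yc yr).1; rewrite ltNge ltW.
have step_le i : Num.max 0 (g i z) - Num.max 0 (g i y) <= 0.
  rewrite subr_le0; have [gi_lt0|gi_ge0] := ltP (g i c) 0.
    have gz := (desc i zc zr).1 gi_lt0; have gy := (desc i yc yr).1 gi_lt0.
    by rewrite (max_l (ltW gz)) (max_l (ltW gy)).
  apply: le_max2 => //; apply: le_trans ((desc i yc yr).2 gi_ge0 t t_gt0 tr) _.
  by rewrite gerDl oppr_le0; apply: mulr_ge0; apply: ltW.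
rewrite /viol -sumrB (bigD1 j) //= (max_r (ltW gjz)) (max_r (ltW gjy)).
have := (desc j yc yr).2 gj_ge0 t t_gt0 tr; rewrite -/z.
have : \sum_(i < m | i != j) (Num.max 0 (g i z) - Num.max 0 (g i y)) <= 0.
  by apply: sumr_le0 => i _; apply: step_le.
lra.
Qed.

Lemma penalty_dquot_ub eps y (j : 'I_m) : same_z Iz y c -> enorm (vsub y c) < r / 2 ->
  0 < g j y -> 0 < eps -> eps <= k / (2 * (L * enorm s + 1)) ->
  dquot_ub Iz (penalty f g eps) y s (-1).
Proof.
move=> yc yc_lt gjy eps_gt0 eps_le.
have s_ge0 := enorm_ge0 s; have yc_ge0 := enorm_ge0 (vsub y c).
have N_gt0 : 0 < 2 * (1 + enorm s) by lra.
set rho := Num.min r (g j y / L).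
have rho_gt0 : 0 < rho by rewrite lt_min divr_gt0 // andbT; lra.
have rho_le_r : rho <= r by rewrite ge_min lexx.
have L_rho : L * rho <= g j y.
  by rewrite mulrC -ler_pdivlMr // ge_min lexx orbT.
exists (rho / (2 * (1 + enorm s))); first by rewrite divr_gt0.
move=> y' t y'y; set del := rho / _ => y'y_lt t_gt0 t_lt.
have del_eq : del * (2 * (1 + enorm s)) = rho by rewrite /del mulfVK ?gt_eqF.
have y'y_ge0 := enorm_ge0 (vsub y' y).
set z := vadd y' (vscale t s).
have zy' : enorm (vsub z y') = t * enorm s := enorm_step y' s (ltW t_gt0).
have zy : same_z Iz z y := same_z_trans (same_z_step y' t s_z) y'y.
have y'c_lt : enorm (vsub y' c) < r.
  by apply: le_lt_trans (enorm_sub_le y' y c) _; nra.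
have zy_lt : enorm (vsub z y) < rho / 2.
  by apply: le_lt_trans (enorm_sub_le z y' y) _; rewrite zy'; nra.
have zc_lt : enorm (vsub z c) < r.
  by apply: le_lt_trans (enorm_sub_le z y c) _; lra.
have gjy' : 0 < g j y'.
  have := lipschitz_c_ge (g_lip j) y'y.
  have : L * enorm (vsub y' y) <= L * rho / 2.
    by rewrite -mulrA ler_pM2l //; nra.
  lra.
have gjz : 0 < g j z.
  have := lipschitz_c_ge (g_lip j) zy.
  have : L * enorm (vsub z y) <= L * rho / 2 by rewrite -mulrA ler_pM2l // ltW.
  lra.
have := viol_descent (same_z_trans y'y yc) y'c_lt zc_lt t_gt0 ltac:(nra) gjy' gjz.
rewrite -/z => viol_step.
have viol_le : (viol g z - viol g y') / t <= - k by rewrite ler_pdivrMr // mulNr.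
have f_le : dquot f y' t s <= L * enorm s.
  exact: le_trans (ler_norm _) (normr_dquot_le f_lip y' s_z t_gt0).
have -> : dquot (penalty f g eps) y' t s =
    dquot f y' t s + eps^-1 * ((viol g z - viol g y') / t) by rewrite /dquot /penalty; ring.
have k_eps : 2 * (L * enorm s + 1) <= eps^-1 * k.
  have D_gt0 : 0 < 2 * (L * enorm s + 1) by have := mulr_ge0 (ltW L_gt0) s_ge0; lra.
  by rewrite [_^-1 * k]mulrC ler_pdivlMr // mulrC -ler_pdivlMr.
have eps_inv_ge0 : 0 <= eps^-1 by rewrite invr_ge0 ltW.
have := ler_wpM2l eps_inv_ge0 viol_le; have := mulr_ge0 (ltW L_gt0) s_ge0.
lra.
Qed.

End DescentDirection.

Lemma locally_nonstationary_descent_dir c s : inX l u c -> inZ Iz c -> inDc Iz l u c s ->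
  (forall i, 0 <= g i c -> forall xi, in_clarke_subdiff Iz (g i) c xi -> dotp xi s < 0) ->
  locally_nonstationary c.
Proof.
move=> cX cZ cs dir; have s_z : zero_z Iz s := cs.1.
have [r r_gt0 [k k_gt0 desc]] := uniform_descent_exists s_z dir.
have [rD rD_gt0 cs_near] := inDc_nbhs cX cs.
exists (Num.min 1 (Num.min rD (r / 2))); first by rewrite !lt_min ltr01 rD_gt0 divr_gt0.
have Ls_ge0 := mulr_ge0 (ltW L_gt0) (enorm_ge0 s).
exists (k / (2 * (L * enorm s + 1))); first by rewrite divr_gt0 //; lra.
move=> y yX; rewrite !lt_min => /and3P[yc1 ycD ycr] eps eps_gt0 eps_le yZ yF.
move=> [_ [_ [clarke_ge0 _]]].
have [j gjy] : exists j, 0 < g j y.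
  by move/existsNP: yF => [j /negP]; rewrite -ltNge; exists j.
have := clarke_ge0 s (cs_near y ycD).
have := clarke_dd_le (penalty_dquot_ub s_z k_gt0 desc (same_z_inZ yZ cZ yc1) ycr gjy
  eps_gt0 eps_le).
by move=> /(le_trans _) le /le; rewrite lee_fin; lra.
Qed.

End LipschitzData.

End Penalty.

Theorem mainTheorem6 (R : realType) (n m : nat) (Iz : {set 'I_n})
    (l u : 'I_n -> R)
    (hlu : forall i, l i < u i)
    (hlz : forall i, i \in Iz -> is_intR (l i))
    (huz : forall i, i \in Iz -> is_intR (u i))
    (f : ('I_n -> R) -> R) (g : 'I_m -> ('I_n -> R) -> R)
    (hLip : exists L : R, 0 < L /\ lipschitz_c Iz L f /\
                          forall i, lipschitz_c Iz L (g i))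
    (hEMFCQ : EMFCQ Iz l u g) :
  exists eps_star : R, 0 < eps_star /\
    forall eps : R, 0 < eps -> eps <= eps_star ->
      forall x : 'I_n -> R, inX l u x -> inZ Iz x -> ~ inF g x ->
        ~ clarke_stationary Iz l u (penalty f g eps) x.
Proof.
case: hLip => L [L_gt0 [f_lip g_lip]].
have local c : inX l u c -> locally_nonstationary Iz l u f g c.
  move=> cX; have [cZ|cZ] := pselect (inZ Iz c); last exact: locally_nonstationary_notZ.
  have [c_int|c_int] := pselect (in_intF g c); first exact: locally_nonstationary_intF.
  case: (hEMFCQ c cX cZ c_int) => [[s [cs dir]]|[d [cd viol_lt]]].
  - by apply: (locally_nonstationary_descent_dir L_gt0 f_lip g_lip cX cZ cs) => i /dir.
  - by apply: (locally_nonstationary_int_move L_gt0 f_lip g_lip cX cZ cd).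
have [e e_gt0 uniform] := box_uniform_pos (@nonstationary_upto_le _ _ _ Iz l u f g) local.
by exists e; split=> // eps eps_gt0 eps_le x xX; apply: uniform.
Qed.
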